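(* Let $X$ have a pdf $f$ satisfying Conditions (A) and (B) below. Suppose the uniform quantizer $Q_{\mathrm{uni}}^\delta$ and the integer-valued Shannon code are used. Then the zero-wait sampler is asymptotically optimal: $$\lim_{\delta\to0}\Big[\mathrm{AoI}(S_{\mathrm z},Q_{\mathrm{uni}}^\delta,L')-\inf_S\mathrm{AoI}(S,Q_{\mathrm{uni}}^\delta,L')\Big]=0,$$ where the infimum is over all stationary deterministic sampling policies $S$.
   Context: Let $X$ be a real random variable with pdf $f$. Condition (A): $f$ is continuous and differentiable, and its support is a bounded interval $I$. Condition (B): $\int_I f\log_2^2 f\,dx$ and $-\int_I f\log_2 f\,dx$ exist and are finite. Quantizer and code. The uniform quantizer $Q_{\mathrm{uni}}^\delta$ partitions $I$ into consecutive cells of length $\delta$. Let $p_i$ be the probability of cell $i$. The integer-valued Shannon code assigns length $\lceil -\log_2 p_i\rceil$ to cell $i$, and $L'$ denotes the resulting random codeword length. Sampling policies. A stationary deterministic sampling policy $S$ is a measurable function $z:[0,\infty)\to[0,W]$, for some fixed $W$, with waiting time $Z=z(L')$. The zero-wait policy $S_{\mathrm z}$ has $z\equiv0$. Objective. The AoI is $\mathrm{AoI}(S,Q,L')=\frac{E[(L'+Z)^2]}{2E[L'+Z]}+E[L']$. *)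

From HB Require Import structures.
From mathcomp Require Import all_boot all_order all_algebra.
From mathcomp Require Import all_classical all_reals all_analysis.
Set Implicit Arguments. Unset Strict Implicit. Unset Printing Implicit Defensive.
Import Order.TTheory GRing.Theory Num.Theory.
Import numFieldNormedType.Exports.
Local Open Scope classical_set_scope.
Local Open Scope ring_scope.

Section AoI.
Variable R : realType.
Local Notation mu := (@lebesgue_measure R).

Definition log2 (x : R) : R := ln x / ln 2.

Definition is_pdf (f : R -> R) : Prop :=
  measurable_fun setT f /\ (forall x, 0 <= f x) /\
  (\int[mu]_x (f x)%:E = 1)%E.

Definition cont_diff_on_interval (f : R -> R) (a b : R) : Prop :=
  {within `[a, b]%classic, continuous f} /\
  (forall x, a < x < b -> derivable f x 1) /\
  cvg ((fun h => h^-1 * (f (a + h) - f a)) @ 0^'+) /\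
  cvg ((fun h => h^-1 * (f (b + h) - f b)) @ 0^'-).

Definition support_is (f : R -> R) (a b : R) : Prop :=
  closure [set x | 0 < f x] = `[a, b]%classic.

Definition condA (f : R -> R) (a b : R) : Prop :=
  a < b /\ is_pdf f /\ cont_diff_on_interval f a b /\ support_is f a b.

Definition condB (f : R -> R) (a b : R) : Prop :=
  mu.-integrable `[a, b]%classic (fun x => (f x * (log2 (f x)) ^+ 2)%:E) /\
  mu.-integrable `[a, b]%classic (fun x => (- (f x * log2 (f x)))%:E).

Definition ncells (a b delta : R) : nat := `|Num.ceil ((b - a) / delta)|%N.

(* index of the cell containing x in I: consecutive cells of length delta,
   [a, a+delta), [a+delta, a+2 delta), ..., the last one being closed at b *)
Definition qindex (a b delta : R) (x : R) : nat :=
  minn `|Num.floor ((x - a) / delta)|%N (ncells a b delta).-1.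

Definition cell (a b delta : R) (i : nat) : set R :=
  [set x | x \in `[a, b] /\ qindex a b delta x = i].

Definition pcell (f : R -> R) (a b delta : R) (i : nat) : R :=
  Rintegral mu (cell a b delta i) f.

Definition shannon_len (f : R -> R) (a b delta : R) (i : nat) : R :=
  (Num.ceil (- log2 (pcell f a b delta i)))%:~R.

Definition EL (f : R -> R) (a b delta : R) (g : R -> R) : R :=
  \sum_(i < ncells a b delta) pcell f a b delta i * g (shannon_len f a b delta i).

Definition policy (W : R) (z : R -> R) : Prop :=
  measurable_fun (`[0, +oo[%classic : set R) z /\ (forall x, 0 <= x -> 0 <= z x <= W).

Definition zero_wait : R -> R := fun _ => 0.

Definition AoI (f : R -> R) (a b delta : R) (z : R -> R) : R :=
  EL f a b delta (fun l => (l + z l) ^+ 2) /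
    (2 * EL f a b delta (fun l => l + z l))
  + EL f a b delta (fun l => l).

Definition AoI_inf (f : R -> R) (a b delta W : R) : R :=
  inf [set AoI f a b delta z | z in policy W].

End AoI.

(* For every sampling policy, Jensen's inequality E[(L'+Z)^2] >= E[L'+Z]^2
   together with E[L'+Z] >= E[L'] gives AoI >= 3/2 E[L'], while the zero-wait
   policy achieves 3/2 E[L'] + Var[L'] / (2 E[L']).  So the optimality gap is at
   most Var[L'] / (2 E[L']).
   Being continuous on [a, b], f is bounded by some M, hence every cell has
   probability p_i <= m = M delta.  Then E[L'] >= -log2 m -> +oo, whereas
   Var[L'] <= sum_i p_i (L'_i + log2 m)^2 stays bounded: the excess
   L'_i + log2 m is at most 1 + log2 (m / p_i), p log2 (m / p)^2 <= 4 m / (ln 2)^2,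
   and there are at most (b - a) / delta + 1 cells.  Hence the gap tends to 0. *)

From HB Require Import structures.
From mathcomp Require Import all_boot all_order all_algebra.
From mathcomp Require Import all_classical all_reals all_analysis.
From mathcomp Require Import measurable_realfun ring lra.
Set Implicit Arguments.
Unset Strict Implicit.
Unset Printing Implicit Defensive.
Import Order.TTheory GRing.Theory Num.Theory.
Import numFieldNormedType.Exports.
Local Open Scope classical_set_scope.
Local Open Scope ring_scope.

Section ShannonCodeLength.
Variable R : realType.
Implicit Types p m s : R.

Definition shannon_codelen p : R := (Num.ceil (- log2 p))%:~R.

Definition shannon_excess_const : R := 2 + 8 / ln 2 ^+ 2.

Lemma ln2_gt0 : 0 < ln (2 : R).
Proof. by apply: ln_gt0; lra. Qed.

Lemma shannon_excess_const_ge0 : 0 <= shannon_excess_const.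
Proof. by rewrite addr_ge0 // divr_ge0 // sqr_ge0. Qed.

Lemma sqr_le_4expR s : 0 <= s -> s ^+ 2 <= 4 * expR s.
Proof.
move=> s0; have h := expR_ge1Dx (s / 2).
have hs : s / 2 * (s / 2) <= expR (s / 2) * expR (s / 2) by apply: ler_pM; lra.
have -> : expR s = expR (s / 2) * expR (s / 2) by rewrite -expRD -splitr.
lra.
Qed.

Lemma mul_sqr_ln_ratio_le p m : 0 < p <= m -> p * (ln m - ln p) ^+ 2 <= 4 * m.
Proof.
move=> /andP[p0 pm]; have m0 := lt_le_trans p0 pm.
set s := ln m - ln p.
have s0 : 0 <= s by rewrite subr_ge0 ler_ln // posrE.
have -> : p = m * expR (- s).
  by rewrite expRN /s expRB !lnK ?posrE // invf_div mulrC divfK // gt_eqF.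
rewrite -mulrA [4 * m]mulrC ler_wpM2l ?(ltW m0) // expRN mulrC.
by rewrite ler_pdivrMr ?expR_gt0 // sqr_le_4expR.
Qed.

Lemma shannon_codelen_ge0 p : p <= 1 -> 0 <= shannon_codelen p.
Proof.
move=> p1; rewrite ler0z ceil_ge0.
suff : 0 <= - log2 p by lra.
by rewrite /log2 oppr_ge0 pmulr_lle0 ?invr_gt0 ?ln2_gt0 // ln_le0.
Qed.

Lemma shannon_codelen_ge p : - log2 p <= shannon_codelen p.
Proof. exact: ceil_ge. Qed.

Lemma shannon_codelen_lt p : shannon_codelen p < - log2 p + 1.
Proof. by have := ceilB1_lt (- log2 p); rewrite /shannon_codelen intrB /=; lra. Qed.

Lemma shannon_codelen_ge_of_le p m : 0 < p <= m -> - log2 m <= shannon_codelen p.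
Proof.
move=> /andP[p0 pm]; apply: le_trans (shannon_codelen_ge p).
by rewrite lerN2 ler_pM2r ?invr_gt0 ?ln2_gt0 // ler_ln // posrE (lt_le_trans p0).
Qed.

(* With s = log2 (m / p): (l + log2 m)^2 <= (s + 1)^2 <= 2 + 2 s^2 and
   p s^2 <= 4 m / (ln 2)^2, whence the constant 2 + 8 / (ln 2)^2. *)
Lemma shannon_excess_sqr_le p m : 0 < m -> 0 <= p <= m ->
  p * (shannon_codelen p + log2 m) ^+ 2 <= m * shannon_excess_const.
Proof.
move=> m0 /andP[p0 pm]; have L0 := ln2_gt0.
have [->|pn0] := eqVneq p 0.
  by rewrite mul0r mulr_ge0 ?(ltW m0) ?shannon_excess_const_ge0.
have pp : 0 < p by rewrite lt_def pn0 p0.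
set s := (ln m - ln p) / ln 2.
have lp : - log2 p = - log2 m + s by rewrite /s /log2; field; rewrite gt_eqF.
have s0 : 0 <= s by rewrite divr_ge0 ?(ltW L0) // subr_ge0 ler_ln ?posrE // (lt_le_trans pp).
have lo := shannon_codelen_ge p; have hi := shannon_codelen_lt p.
have sq : (shannon_codelen p + log2 m) ^+ 2 <= 2 + 2 * s ^+ 2.
  have ex0 : 0 <= shannon_codelen p + log2 m by lra.
  have : (shannon_codelen p + log2 m) ^+ 2 <= (s + 1) ^+ 2 by rewrite ler_sqr ?nnegrE; lra.
  by have := sqr_ge0 (s - 1); rewrite !expr2; nra.
have ps : p * s ^+ 2 <= 4 * m / ln 2 ^+ 2.
  rewrite /s expr_div_n mulrA ler_pM2r ?invr_gt0 ?exprn_gt0 //.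
  by apply: mul_sqr_ln_ratio_le; rewrite pp.
apply: (le_trans (ler_wpM2l p0 sq)).
rewrite /shannon_excess_const.
have -> : m * (2 + 8 / ln 2 ^+ 2) = 2 * m + 2 * (4 * m / ln 2 ^+ 2).
  by field; rewrite gt_eqF.
nra.
Qed.

End ShannonCodeLength.

Section FiniteDistribution.
Variable R : realType.
Variables (N : nat) (p : nat -> R).
Hypothesis p_ge0 : forall i, 0 <= p i.
Hypothesis p_sum1 : \sum_(i < N) p i = 1.

Lemma variance_shift (x : nat -> R) (c : R) :
  \sum_(i < N) p i * x i ^+ 2 - (\sum_(i < N) p i * x i) ^+ 2 =
  \sum_(i < N) p i * (x i - c) ^+ 2 - (\sum_(i < N) p i * x i - c) ^+ 2.
Proof.
have -> : \sum_(i < N) p i * (x i - c) ^+ 2 = \sum_(i < N) p i * x i ^+ 2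
    - 2 * c * \sum_(i < N) p i * x i + c ^+ 2 * \sum_(i < N) p i.
  rewrite !mulr_sumr -sumrB -big_split /=; apply: eq_bigr => i _; ring.
by rewrite p_sum1; ring.
Qed.

Lemma variance_le_sum_sqr_dev (x : nat -> R) (c : R) :
  \sum_(i < N) p i * x i ^+ 2 - (\sum_(i < N) p i * x i) ^+ 2 <=
  \sum_(i < N) p i * (x i - c) ^+ 2.
Proof. by rewrite (variance_shift x c) lerBlDr lerDl sqr_ge0. Qed.

Lemma sqr_mean_le_mean_sqr (x : nat -> R) :
  (\sum_(i < N) p i * x i) ^+ 2 <= \sum_(i < N) p i * x i ^+ 2.
Proof.
rewrite -subr_ge0 (variance_shift x (\sum_(i < N) p i * x i)) subrr expr0n subr0.
by apply: sumr_ge0 => i _; rewrite mulr_ge0 ?sqr_ge0.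
Qed.

End FiniteDistribution.

Section ShannonMoments.
Variable R : realType.
Variables (N : nat) (p : nat -> R) (m B : R).
Hypothesis m_gt0 : 0 < m.
Hypothesis p_bound : forall i, 0 <= p i <= m.
Hypothesis p_sum1 : \sum_(i < N) p i = 1.
Hypothesis Nm_le : N%:R * m <= B.

Lemma log2_le_mean_codelen : - log2 m <= \sum_(i < N) p i * shannon_codelen (p i).
Proof.
rewrite -[- log2 m]mul1r -p_sum1 mulr_suml; apply: ler_sum => i _.
have /andP[p0 pm] := p_bound i.
have [->|pn0] := eqVneq (p i) 0; first by rewrite !mul0r.
by rewrite ler_wpM2l // shannon_codelen_ge_of_le // lt_def pn0 p0.
Qed.

Lemma variance_codelen_le :
  \sum_(i < N) p i * shannon_codelen (p i) ^+ 2
    - (\sum_(i < N) p i * shannon_codelen (p i)) ^+ 2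
    <= B * shannon_excess_const R.
Proof.
apply: le_trans (variance_le_sum_sqr_dev p_sum1 (fun i => shannon_codelen (p i)) (- log2 m)) _.
apply: le_trans (_ : \sum_(i < N) m * shannon_excess_const R <= _).
  apply: ler_sum => i _; rewrite opprK; exact: shannon_excess_sqr_le.
rewrite sumr_const card_ord -mulr_natl mulrA.
by rewrite ler_wpM2r ?shannon_excess_const_ge0.
Qed.

End ShannonMoments.

Section AoIGap.
Variable R : realType.
Variables (f : R -> R) (a b d W : R).
Hypothesis W_ge0 : 0 <= W.
Hypothesis pcell_bound : forall i, 0 <= pcell f a b d i <= 1.
Hypothesis pcell_sum1 : \sum_(i < ncells a b d) pcell f a b d i = 1.

Let E1 := EL f a b d (fun l => l).
Let E2 := EL f a b d (fun l => l ^+ 2).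
Hypothesis E1_gt0 : 0 < E1.

Let len_ge0 i : 0 <= shannon_len f a b d i.
Proof. by have /andP[_ p1] := pcell_bound i; exact: shannon_codelen_ge0. Qed.

Lemma AoI_zero_wait : AoI f a b d (@zero_wait R) = E2 / (2 * E1) + E1.
Proof.
by rewrite /AoI /zero_wait; congr (EL _ _ _ _ _ / (2 * EL _ _ _ _ _) + _);
  apply/funext => l; rewrite addr0.
Qed.

Lemma zero_wait_policy : policy W (@zero_wait R).
Proof. by split=> [|x _]; [exact: measurable_cst | rewrite /zero_wait lexx W_ge0]. Qed.

Lemma AoI_policy_ge z : policy W z -> 3 / 2 * E1 <= AoI f a b d z.
Proof.
move=> [_ zb]; have p0 i : 0 <= pcell f a b d i by have /andP[] := pcell_bound i.
set S := EL f a b d (fun l => l + z l).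
have SE : E1 <= S.
  apply: ler_sum => i _; rewrite ler_wpM2l // lerDl.
  by have /andP[] := zb _ (len_ge0 i).
have S0 : 0 < S := lt_le_trans E1_gt0 SE.
set A := EL f a b d (fun l => (l + z l) ^+ 2).
have AS : S ^+ 2 <= A.
  exact: (sqr_mean_le_mean_sqr p0 pcell_sum1
            (fun i => shannon_len f a b d i + z (shannon_len f a b d i))).
have : S / 2 <= A / (2 * S).
  rewrite ler_pdivlMr ?mulr_gt0 //.
  by have -> : S / 2 * (2 * S) = S ^+ 2 by field.
rewrite /AoI -/E1 -/S -/A; lra.
Qed.

Lemma AoI_gap_le :
  0 <= AoI f a b d (@zero_wait R) - AoI_inf f a b d W <= (E2 - E1 ^+ 2) / (2 * E1).
Proof.
set E := [set AoI f a b d z | z in policy W].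
have zE : E (AoI f a b d (@zero_wait R)).
  by exists (@zero_wait R); first exact: zero_wait_policy.
have lb : lbound E (3 / 2 * E1) by move=> _ [z zW <-]; exact: AoI_policy_ge.
have inf_ge : 3 / 2 * E1 <= AoI_inf f a b d W.
  by apply: lb_le_inf lb; exists (AoI f a b d (@zero_wait R)).
have inf_le : AoI_inf f a b d W <= AoI f a b d (@zero_wait R).
  by apply: ge_inf zE; exists (3 / 2 * E1).
have -> : (E2 - E1 ^+ 2) / (2 * E1) = E2 / (2 * E1) + E1 - 3 / 2 * E1.
  by field; rewrite gt_eqF.
rewrite -AoI_zero_wait; apply/andP; split; lra.
Qed.

End AoIGap.

Section UniformQuantizer.
Variable R : realType.
Variables (a b d : R).
Hypothesis ab : a < b.
Hypothesis d_gt0 : 0 < d.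

Local Notation N := (ncells a b d).

Lemma ncells_ceil_gt0 : 0 < Num.ceil ((b - a) / d).
Proof. by rewrite ceil_gt0 divr_gt0 // subr_gt0. Qed.

Lemma ncellsE : N%:R = (Num.ceil ((b - a) / d))%:~R :> R.
Proof. by rewrite -[in RHS](gtz0_abs ncells_ceil_gt0). Qed.

Lemma ncells_gt0 : (0 < N)%N.
Proof. by rewrite absz_gt0 gt_eqF // ncells_ceil_gt0. Qed.

Lemma ncells_mul_ge : b - a <= N%:R * d.
Proof. by rewrite -ler_pdivrMr // ncellsE ceil_ge. Qed.

Lemma ncells_mul_le : N%:R * d <= b - a + d.
Proof.
rewrite -ler_pdivlMr // ncellsE.
have := ceilB1_lt ((b - a) / d); rewrite intrB /=.
have -> : (b - a + d) / d = (b - a) / d + 1 by field; rewrite gt_eqF.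
by lra.
Qed.

Lemma leq_qindex x k : a <= x ->
  (k <= qindex a b d x)%N = (k <= N.-1)%N && (a + k%:R * d <= x).
Proof.
move=> ax; rewrite /qindex leq_min andbC; congr (_ && _).
have xa0 : 0 <= (x - a) / d by rewrite divr_ge0 ?subr_ge0 // ltW.
rewrite -lez_nat gez0_abs ?floor_ge0 // floor_ge_int.
by rewrite ler_pdivlMr // lerBrDl.
Qed.

Lemma qindex_lt x : (qindex a b d x < N)%N.
Proof. by rewrite /qindex (leq_ltn_trans (geq_minr _ _)) // prednK ?ncells_gt0. Qed.

Definition cells_from (k : nat) : set R :=
  if (k <= N.-1)%N then `[a + k%:R * d, +oo[%classic else set0.

Lemma cells_fromP x k : a <= x -> cells_from k x <-> (k <= qindex a b d x)%N.
Proof.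
by move=> ax; rewrite leq_qindex // /cells_from; case: ifP => //= _; rewrite in_itv andbT.
Qed.

Lemma cellE i : cell a b d i = `[a, b]%classic `&` (cells_from i `\` cells_from i.+1).
Proof.
apply/seteqP; split=> x.
  move=> [xab <-]; have ax : a <= x by move: xab; rewrite in_itv /= => /andP[].
  split; first exact: xab.
  by split=> [|/(cells_fromP _ ax)]; [apply/(cells_fromP _ ax) | rewrite ltnn].
move=> [xab [lo hi]]; have ax : a <= x by move: xab => /=; rewrite in_itv /= => /andP[].
split; first exact: xab.
move/(cells_fromP _ ax): lo; move/(cells_fromP _ ax)/negP: hi.
by rewrite -ltnNge => hi lo; apply/eqP; rewrite eqn_leq lo -ltnS hi.
Qed.

Lemma measurable_cell i : measurable (cell a b d i).
Proof.
rewrite cellE; apply: measurableI; first exact: measurable_itv.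
by apply: measurableD; rewrite /cells_from; case: ifP.
Qed.

Lemma cell_sub_itv i : cell a b d i `<=` `[a + i%:R * d, a + i.+1%:R * d]%classic.
Proof.
move=> x; rewrite cellE => -[/= xab [lo hi]].
have /andP[ax xb] : a <= x <= b by move: xab; rewrite in_itv.
move: lo; rewrite /cells_from; case: ifP => //= iN; rewrite !in_itv /= andbT => -> /=.
move: hi; rewrite /cells_from; case: ifP => /= [_|iN1 _].
  by rewrite in_itv /= andbT => /negP; rewrite -ltNge => /ltW.
have -> : i.+1 = N by apply/eqP; rewrite eqn_leq -(prednK ncells_gt0) ltnS iN ltnNge iN1.
by have := ncells_mul_ge; lra.
Qed.

Lemma bigcup_cells : \bigcup_(i in [set` iota 0 N]) cell a b d i = `[a, b]%classic.
Proof.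
apply/seteqP; split=> [x [i _ []] //|x xab].
by exists (qindex a b d x) => //=; rewrite mem_iota add0n qindex_lt.
Qed.

Lemma trivIset_cells : trivIset [set` iota 0 N] (cell a b d).
Proof. by move=> i j _ _ [x [[_ <-] [_ <-]]]. Qed.

End UniformQuantizer.

Section CellProbability.
Variable R : realType.
Local Notation mu := (@lebesgue_measure R).
Variables (f : R -> R) (a b d M : R).
Hypothesis ab : a < b.
Hypothesis d_gt0 : 0 < d.
Hypothesis f_ge0 : forall x, 0 <= f x.
Hypothesis measurable_f : measurable_fun setT f.
Hypothesis f_int1 : (\int[mu]_x (f x)%:E = 1)%E.
Hypothesis f_out : forall x, ~ `[a, b]%classic x -> f x = 0.
Hypothesis f_le : forall x, `[a, b]%classic x -> f x <= M.

Let measurable_Ef D : measurable D -> measurable_fun D (EFin \o f).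
Proof. by move=> mD; apply/measurable_EFinP; exact: measurable_funS measurable_f. Qed.

Lemma measure_cell_le i : (mu (cell a b d i) <= d%:E)%E.
Proof.
apply: (@le_trans _ _ (mu `[a + i%:R * d, a + i.+1%:R * d]%classic)).
  apply: le_measure; rewrite ?inE.
  - exact: measurable_cell.
  - exact: measurable_itv.
  - exact: cell_sub_itv.
rewrite lebesgue_measure_itv /= lte_fin ltrD2l ltr_pM2r // ltr_nat ltnSn.
by rewrite -EFinD lee_fin mulrSr; lra.
Qed.

Lemma integral_cell_bound i :
  (0 <= \int[mu]_(x in cell a b d i) (f x)%:E <= (M * d)%:E)%E.
Proof.
have mc := measurable_cell a b d_gt0 i.
rewrite integral_ge0 => [/=|x _]; last by rewrite lee_fin.
have M0 : 0 <= M.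
  by apply: le_trans (f_ge0 a) (f_le _); rewrite /= in_itv /= lexx ltW.
apply: (@le_trans _ _ (\int[mu]_(x in cell a b d i) M%:E)%E).
  apply: ge0_le_integral => //; [by move=> x _; rewrite lee_fin | exact: measurable_Ef |].
  by move=> x; rewrite cellE // => -[xab _]; rewrite lee_fin f_le.
by rewrite integral_cst // EFinM lee_wpmul2l ?lee_fin // measure_cell_le.
Qed.

Let integral_cell_fin i : (\int[mu]_(x in cell a b d i) (f x)%:E)%E \is a fin_num.
Proof.
have /andP[h0 h1] := integral_cell_bound i.
by rewrite ge0_fin_numE // (le_lt_trans h1) ?ltry.
Qed.

Lemma pcell_bound i : 0 <= pcell f a b d i <= M * d.
Proof.
have /andP[h0 h1] := integral_cell_bound i.
by rewrite /pcell /Rintegral fine_ge0 //= -lee_fin fineK ?integral_cell_fin.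
Qed.

Lemma integral_itv_pdf : (\int[mu]_(x in `[a, b]%classic) (f x)%:E = 1)%E.
Proof.
rewrite integral_mkcond -f_int1; congr integral; apply/funext => x.
by rewrite patchE; case: ifPn => // /negP xab; rewrite f_out // => /mem_set.
Qed.

Lemma pcell_sum1 : \sum_(i < ncells a b d) pcell f a b d i = 1.
Proof.
rewrite -(big_mkord xpredT) /index_iota subn0 /pcell /Rintegral.
rewrite sum_fine => [|i _]; last exact: integral_cell_fin.
rewrite -ge0_integral_bigsetU ?iota_uniq //.
- by rewrite -bigcup_seq bigcup_cells // integral_itv_pdf.
- exact: measurable_cell.
- exact: trivIset_cells.
- by rewrite -bigcup_seq bigcup_cells //; apply: measurable_Ef; exact: measurable_itv.
- by move=> x _; rewrite lee_fin.
Qed.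

End CellProbability.

Lemma ln_scale_cvgNy (R : realType) (M : R) : 0 < M ->
  ln (M * x) @[x --> 0^'+] --> -oo.
Proof.
move=> M0; apply/cvgrNyPle => y; near=> x.
rewrite -ler_expR lnK ?posrE ?mulr_gt0 // mulrC -ler_pdivlMr //.
by near: x; apply: nbhs_right_le; rewrite divr_gt0 ?expR_gt0.
Unshelve. all: by end_near. Qed.

Section ZeroWaitGap.
Variable R : realType.
Variables (f : R -> R) (a b M W : R).
Hypothesis ab : a < b.
Hypothesis f_ge0 : forall x, 0 <= f x.
Hypothesis measurable_f : measurable_fun setT f.
Hypothesis f_int1 : (\int[lebesgue_measure]_x (f x)%:E = 1)%E.
Hypothesis f_out : forall x, ~ `[a, b]%classic x -> f x = 0.
Hypothesis f_le : forall x, `[a, b]%classic x -> f x <= M.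
Hypothesis M_gt0 : 0 < M.
Hypothesis W_ge0 : 0 <= W.

Lemma AoI_zero_wait_gap_le d : 0 < d <= 1 -> M * d < 1 ->
  0 <= AoI f a b d (@zero_wait R) - AoI_inf f a b d W
    <= - (ln 2 * (M * (b - a + 1) * shannon_excess_const R) / 2) / ln (M * d).
Proof.
move=> /andP[d0 d1] Md1; set m := M * d; set B := M * (b - a + 1).
have m0 : 0 < m by rewrite mulr_gt0.
have p_bound := pcell_bound ab d0 f_ge0 measurable_f f_le.
have p_sum1 := pcell_sum1 ab d0 f_ge0 measurable_f f_int1 f_out f_le.
have Nm_le : (ncells a b d)%:R * m <= B.
  rewrite /m /B mulrCA ler_wpM2l ?(ltW M_gt0) //.
  by have := ncells_mul_le ab d0; lra.
have lnm : ln m < 0 by rewrite ln_lt0 // m0.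
have L0 := ln2_gt0 R.
have c0 : 0 < - log2 m by rewrite /log2 -mulNr mulr_gt0 ?invr_gt0 // oppr_gt0.
have E1_ge : - log2 m <= EL f a b d (fun l => l) := log2_le_mean_codelen p_bound p_sum1.
have var_le : EL f a b d (fun l => l ^+ 2) - EL f a b d (fun l => l) ^+ 2
    <= B * shannon_excess_const R := variance_codelen_le m0 p_bound p_sum1 Nm_le.
have E1_gt0 := lt_le_trans c0 E1_ge.
have p_le1 i : 0 <= pcell f a b d i <= 1.
  by have /andP[-> /le_trans ->] := p_bound i => //; exact: ltW.
have /andP[-> gap_le] := AoI_gap_le W_ge0 p_le1 p_sum1 E1_gt0.
apply: le_trans gap_le _.
set E1 := EL f a b d (fun l => l) in E1_ge E1_gt0 var_le *.
set K := B * shannon_excess_const R in var_le *.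
have B0 : 0 <= B by rewrite /B mulr_ge0 ?(ltW M_gt0) // addr_ge0 // subr_ge0 ltW.
have K0 : 0 <= K by rewrite /K mulr_ge0 ?shannon_excess_const_ge0.
apply: le_trans (_ : K / (2 * - log2 m) <= _).
  rewrite ler_pdivrMr ?mulr_gt0 //.
  have -> : K / (2 * - log2 m) * (2 * E1) = K * E1 / - log2 m.
    by field; rewrite -oppr_eq0 gt_eqF.
  by apply: le_trans var_le _; rewrite ler_pdivlMr // ler_wpM2l.
suff -> : K / (2 * - log2 m) = - (ln 2 * K / 2) / ln m by [].
by rewrite /log2; field; rewrite ltr0_neq0 ?gt_eqF.
Qed.

End ZeroWaitGap.

Unset Implicit Arguments.

Theorem corollary1 (R : realType) (f : R -> R) (a b W : R) :
  condA f a b -> condB f a b -> 0 <= W ->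
  (fun delta => AoI f a b delta (@zero_wait R) - AoI_inf f a b delta W)
    @ 0^'+ --> 0.
Proof.
move=> [ab [[measurable_f [f_ge0 f_int1]] [[f_cont _] f_supp]]] _ W_ge0.
have f_out x : ~ `[a, b]%classic x -> f x = 0.
  move=> xab; apply/eqP; rewrite eq_le f_ge0 andbT leNgt; apply/negP => fx.
  by apply: xab; rewrite -f_supp; exact: subset_closure.
have [c _ f_max] := EVT_max (ltW ab) f_cont.
set M := f c + 1.
have M_gt0 : 0 < M by rewrite ltr_pwDr.
have f_le x : `[a, b]%classic x -> f x <= M by move/f_max; rewrite /M; lra.
set C := ln 2 * (M * (b - a + 1) * shannon_excess_const R) / 2.
have small : \forall d \near 0^'+, [/\ 0 < d, d <= 1 & M * d < 1].
  near=> d; split; first by near: d; exact: nbhs_right_gt.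
    by near: d; apply: nbhs_right_le; exact: ltr01.
  by rewrite mulrC -ltr_pdivlMr // mul1r; near: d; apply: nbhs_right_lt; rewrite invr_gt0.
apply: (@squeeze_cvgr _ _ _ _ (fun=> 0) (fun d => - C / ln (M * d))).
- near=> d; have /(_ _)[//|d0 d1 Md1] := near small d.
  by apply: AoI_zero_wait_gap_le => //; rewrite d0.
- exact: cvg_cst.
- have lnV : (ln (M * d))^-1 @[d --> 0^'+] --> 0.
    apply/ltr0_cvgV0; last exact: ln_scale_cvgNy.
    by near=> d; have /(_ _)[//|d0 _ Md1] := near small d; rewrite ln_lt0 // mulr_gt0.
  by rewrite -[X in _ --> X](mulr0 (- C)); exact: cvgMr.
Unshelve. all: by end_near. Qed.
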